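(* For all integers $0\le t\le n$ with $n\ge1$, the exact-$t$ function $f^{=}_{t,n}:\{0,1\}^n\to\{0,1\}$, defined by $f^{=}_{t,n}(x)=1$ if $\sum_{i=1}^n x_i=t$ and $f^{=}_{t,n}(x)=0$ otherwise, has a quadratization using $\lfloor n/2\rfloor$ auxiliary variables.
   Context: A quadratization of $f:\{0,1\}^n\to\mathbb{R}$ using $m$ auxiliary variables is a polynomial $g(x,y)$ of degree at most $2$ in $x_1,\ldots,x_n,y_1,\ldots,y_m$ such that $f(x)=\min\{g(x,y):y\in\{0,1\}^m\}$ for all $x\in\{0,1\}^n$. *)

From HB Require Import structures.
From mathcomp Require Import all_boot all_order all_algebra.
Set Implicit Arguments. Unset Strict Implicit. Unset Printing Implicit Defensive.
Import Order.TTheory GRing.Theory Num.Theory.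
Local Open Scope ring_scope.

(* Boolean points {0,1}^k are finite functions 'I_k -> bool; a bit b is read
   as the number b%:R (0 or 1). *)

Definition quad_eval (R : nzRingType) (k : nat) (c : R) (a : 'I_k -> R)
  (b : 'I_k -> 'I_k -> R) (z : 'I_k -> R) : R :=
  c + \sum_(i < k) a i * z i + \sum_(i < k) \sum_(j < k) b i j * z i * z j.

Definition join_pt (R : nzRingType) (n m : nat) (x : {ffun 'I_n -> bool})
  (y : {ffun 'I_m -> bool}) : 'I_(n + m) -> R :=
  fun i => match split i with
           | inl i' => (x i')%:R
           | inr j' => (y j')%:R
           end.

(* g is a quadratization of f with m auxiliary variables:
   f(x) = min_{y in {0,1}^m} g(x,y) for all x in {0,1}^n. *)
Definition is_quadratization (R : realFieldType) (n m : nat)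
  (f : {ffun 'I_n -> bool} -> R) (c : R) (a : 'I_(n + m) -> R)
  (b : 'I_(n + m) -> 'I_(n + m) -> R) : Prop :=
  forall x : {ffun 'I_n -> bool},
    (forall y : {ffun 'I_m -> bool}, f x <= quad_eval c a b (join_pt R x y)) /\
    (exists y : {ffun 'I_m -> bool}, quad_eval c a b (join_pt R x y) = f x).

Definition has_quadratization (R : realFieldType) (n m : nat)
  (f : {ffun 'I_n -> bool} -> R) : Prop :=
  exists c a b, @is_quadratization R n m f c a b.

Definition exact_fun (R : nzRingType) (t n : nat) (x : {ffun 'I_n -> bool}) : R :=
  if (\sum_(i < n) (x i : nat))%N == t then 1 else 0.

From HB Require Import structures.
From mathcomp Require Import all_boot all_order all_algebra.
From mathcomp Require Import zify ring lra.
Set Implicit Arguments. Unset Strict Implicit. Unset Printing Implicit Defensive.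
Import Order.TTheory GRing.Theory Num.Theory.

(* Write s for the number of ones in x.  With one auxiliary bit y and the numbers k1, k2
   of ones in two further blocks of auxiliary bits, of sizes (n - t - 1)/2 and (t - 1)/2,
   the polynomial
     g = D^2/2 - 1/8 + 2 (y k1 + (1 - y) k2),   D = s - t - 3/2 - 2 k1 + 3 y + 2 k2,
   is a quadratization.  As d = D - 1/2 is an integer, D^2/2 - 1/8 = d (d + 1)/2 is a
   nonnegative integer which vanishes only for d in {-1, 0}.  If s = t then every choice
   of y, k1, k2 gives g >= 1, with equality for k1 = k2 = 0.  If s > t, take y = 0 and
   k1 = (s - t - 1)/2; if s < t, take y = 1 and k2 = (t - s - 1)/2: then d is -1 or 0 and
   the penalty term vanishes, so g = 0.  The bit y is only free when 0 < t < n; otherwise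
   it is fixed to [t = n], which keeps the number of auxiliary bits within n %/ 2. *)

Section QuadraticFunctions.
Variables (R : comNzRingType) (k : nat).
Local Open Scope ring_scope.
Implicit Types (F G : ('I_k -> R) -> R) (r : R).

Definition lin_form (l z : 'I_k -> R) : R := \sum_(i < k) l i * z i.

Definition affine_fun F :=
  exists l0 (l : 'I_k -> R), forall z, F z = l0 + lin_form l z.

Definition quadratic_fun F :=
  exists c a b, forall z, F z = quad_eval c a b z.

Lemma eq_affine_fun F G : affine_fun F -> F =1 G -> affine_fun G.
Proof. by move=> [l0 [l eF]] eFG; exists l0, l => z; rewrite -eFG. Qed.

Lemma eq_quadratic_fun F G : quadratic_fun F -> F =1 G -> quadratic_fun G.
Proof. by move=> [c [a [b eF]]] eFG; exists c, a, b => z; rewrite -eFG. Qed.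

Lemma affine_cst r : affine_fun (fun=> r).
Proof. by exists r, (fun=> 0) => z; rewrite /lin_form big1 ?addr0 // => i _; rewrite mul0r. Qed.

Lemma affine_lin_form (l : 'I_k -> R) : affine_fun (lin_form l).
Proof. by exists 0, l => z; rewrite add0r. Qed.

Lemma affineD F G : affine_fun F -> affine_fun G -> affine_fun (fun z => F z + G z).
Proof.
move=> [f0 [f eF]] [g0 [g eG]]; exists (f0 + g0), (fun i => f i + g i) => z.
rewrite eF eG /lin_form (eq_bigr _ (fun i _ => mulrDl _ _ _)) big_split /=; ring.
Qed.

Lemma affineZ r F : affine_fun F -> affine_fun (fun z => r * F z).
Proof.
move=> [f0 [f eF]]; exists (r * f0), (fun i => r * f i) => z.
by rewrite eF mulrDr /lin_form mulr_sumr (eq_bigr _ (fun i _ => mulrA _ _ _)).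
Qed.

Lemma quadraticD F G :
  quadratic_fun F -> quadratic_fun G -> quadratic_fun (fun z => F z + G z).
Proof.
move=> [c1 [a1 [b1 eF]]] [c2 [a2 [b2 eG]]].
exists (c1 + c2), (fun i => a1 i + a2 i), (fun i j => b1 i j + b2 i j) => z.
rewrite eF eG /quad_eval (eq_bigr _ (fun i _ => mulrDl _ _ _)) big_split /=.
under [X in _ = _ + X]eq_bigr do under eq_bigr do rewrite !mulrDl.
under [X in _ = _ + X]eq_bigr do rewrite big_split.
rewrite big_split /=; ring.
Qed.

Lemma quadraticZ r F : quadratic_fun F -> quadratic_fun (fun z => r * F z).
Proof.
move=> [c [a [b eF]]]; exists (r * c), (fun i => r * a i), (fun i j => r * b i j) => z.
rewrite eF /quad_eval !mulrDr !mulr_sumr (eq_bigr _ (fun i _ => mulrA _ _ _)).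
by congr (_ + _); apply: eq_bigr => i _; rewrite mulr_sumr; apply: eq_bigr => j _; rewrite !mulrA.
Qed.

Lemma quadraticM F G :
  affine_fun F -> affine_fun G -> quadratic_fun (fun z => F z * G z).
Proof.
move=> [f0 [f eF]] [g0 [g eG]].
exists (f0 * g0), (fun i => f0 * g i + g0 * f i), (fun i j => f i * g j) => z.
rewrite /quad_eval.
have -> : \sum_(i < k) (f0 * g i + g0 * f i) * z i =
    f0 * \sum_(i < k) g i * z i + g0 * \sum_(i < k) f i * z i.
  by rewrite !mulr_sumr -big_split; apply: eq_bigr => i _ /=; ring.
have -> : \sum_(i < k) \sum_(j < k) f i * g j * z i * z j =
    (\sum_(i < k) f i * z i) * (\sum_(j < k) g j * z j).
  by rewrite mulr_suml; apply: eq_bigr => i _; rewrite mulr_sumr; apply: eq_bigr => j _; ring.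
rewrite eF eG /lin_form; ring.
Qed.

Lemma affine_quadratic F : affine_fun F -> quadratic_fun F.
Proof.
move=> aF; apply: (eq_quadratic_fun (quadraticM aF (affine_cst 1))) => z.
by rewrite mulr1.
Qed.

End QuadraticFunctions.

Section Windows.
Variable m : nat.

Definition window_count (a b : nat) (y : {ffun 'I_m -> bool}) : nat :=
  \sum_(j < m) ((a <= j < b) && y j).

Lemma sum_ord_interval (a b : nat) :
  \sum_(j < m) (a <= j < b) = minn b m - minn a m.
Proof.
elim: m => [|k IHk]; first by rewrite big_ord0 !minn0.
by rewrite big_ord_recr /= IHk; case: (leqP a k); case: (ltnP k b) => /=; lia.
Qed.

Lemma window_count_le (a b : nat) (y : {ffun 'I_m -> bool}) : window_count a b y <= b - a.
Proof.
apply: leq_trans (_ : \sum_(j < m) (a <= j < b) <= _); last by rewrite sum_ord_interval; lia.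
by apply: leq_sum => j _; case: (a <= j < b); case: (y j).
Qed.

Lemma window_count_prefix (a b k : nat) (y : {ffun 'I_m -> bool}) :
  a + k <= b <= m -> (forall j : 'I_m, a <= j < b -> y j = (j < a + k)) ->
  window_count a b y = k.
Proof.
move=> hab ey; rewrite /window_count (eq_bigr (fun j : 'I_m => (a <= j < a + k : nat))).
  by rewrite sum_ord_interval; lia.
move=> j _; congr nat_of_bool.
by case jab: (a <= j < b); [rewrite ey ?jab | ]; lia.
Qed.
End Windows.

Section JoinedPoint.
Variables (R : comNzRingType) (n m : nat).
Local Open Scope ring_scope.

Definition x_weight (i : 'I_(n + m)) : R := if split i is inl _ then 1 else 0.

Definition window_weight (a b : nat) (i : 'I_(n + m)) : R :=
  if split i is inr j then (a <= j < b)%N%:R else 0.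

Lemma x_weight_join x y :
  lin_form x_weight (join_pt R x y) = (\sum_(i < n) x i)%N%:R.
Proof.
rewrite /lin_form big_split_ord /= [X in _ + X]big1 ?addr0 => [|j _]; last first.
  by rewrite /x_weight (unsplitK (inr j)) mul0r.
by rewrite natr_sum; apply: eq_bigr => i _; rewrite /x_weight /join_pt (unsplitK (inl i)) mul1r.
Qed.

Lemma window_weight_join a b x y :
  lin_form (window_weight a b) (join_pt R x y) = (window_count a b y)%:R.
Proof.
rewrite /lin_form big_split_ord /= big1 ?add0r => [|i _]; last first.
  by rewrite /window_weight (unsplitK (inl i)) mul0r.
rewrite natr_sum; apply: eq_bigr => j _; rewrite /window_weight /join_pt (unsplitK (inr j)).
by rewrite -natrM mulnb.
Qed.
End JoinedPoint.

Arguments x_weight {R n m} i.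
Arguments window_weight {R n m} a b i.

Section ExactGadget.
Variable R : realFieldType.
Local Open Scope ring_scope.

Definition exact_gadget (t s y k1 k2 : R) : R :=
  let D := s - t - 3/2 - 2 * k1 + 3 * y + 2 * k2 in
  D * D / 2 - 1/8 + 2 * (y * k1 + (1 - y) * k2).

Lemma exact_gadget_quadratic k (t : R) (S Y K1 K2 : ('I_k -> R) -> R) :
  affine_fun S -> affine_fun Y -> affine_fun K1 -> affine_fun K2 ->
  quadratic_fun (fun z => exact_gadget t (S z) (Y z) (K1 z) (K2 z)).
Proof.
move=> aS aY aK1 aK2.
have aD : affine_fun (fun z => S z - t - 3/2 - 2 * K1 z + 3 * Y z + 2 * K2 z).
  apply: (eq_affine_fun (affineD (affineD (affineD aS (affine_cst _ (- t - 3/2)))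
    (affineZ (-2) aK1)) (affineD (affineZ 3 aY) (affineZ 2 aK2)))) => z /=; ring.
apply: (eq_quadratic_fun (quadraticD (quadraticD (quadraticZ (1/2) (quadraticM aD aD))
  (affine_quadratic (affine_cst _ (-1/8)))) (quadraticZ 2 (quadraticD
  (quadraticD (quadraticM aY aK1) (affine_quadratic aK2)) (quadraticZ (-1) (quadraticM aY aK2))))))
  => z; rewrite /exact_gadget /=; ring.
Qed.

Lemma int_mul_succ_ge0 (d : int) : 0 <= d * (d + 1).
Proof. nia. Qed.

Lemma int_mul_succ_ge2 (d : int) : d != 0 -> d != -1 -> 2 <= d * (d + 1).
Proof. nia. Qed.

Lemma exact_gadget_nat (s t k1 k2 : nat) (b : bool) :
  let d : int := s%:Z - t%:Z - 2 + 3 * b%:Z + 2 * (k2%:Z - k1%:Z) in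
  exact_gadget t%:R s%:R b%:R k1%:R k2%:R =
    (d * (d + 1))%:~R / 2 + 2 * (if b then k1 else k2)%:R.
Proof.
by rewrite /exact_gadget /= !(intrM, intrD, intrN, intrB) /=; case: b => /=; field.
Qed.

Lemma exact_gadget_int_ge (s t k1 k2 : nat) (b : bool) (d : int) :
  d = s%:Z - t%:Z - 2 + 3 * b%:Z + 2 * (k2%:Z - k1%:Z) ->
  2 * (s == t)%:Z <= d * (d + 1) + 4 * (if b then k1 else k2)%:Z.
Proof.
move=> ed; have := int_mul_succ_ge0 d; case: eqP => [est|_] /= hd; last by nia.
have [pen0|] := eqVneq (if b then k1 else k2) 0%N; last by lia.
rewrite pen0 addr0 mulr1 {}ed est.
by apply: int_mul_succ_ge2; case: b pen0 => /= ->; lia.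
Qed.

Lemma exact_gadget_ge (s t k1 k2 : nat) (b : bool) :
  (s == t)%:R <= exact_gadget t%:R s%:R b%:R k1%:R k2%:R.
Proof.
rewrite exact_gadget_nat /=.
have := @exact_gadget_int_ge s t k1 k2 b _ erefl.
rewrite -(ler_int R) !(intrM, intrD) /=; lra.
Qed.

Lemma exact_gadget_eq (t : nat) (b : bool) :
  exact_gadget t%:R t%:R b%:R 0 0 = 1.
Proof. by rewrite /exact_gadget; case: b => /=; field. Qed.

Lemma exact_gadget_lt (s t q r : nat) :
  (r <= 1)%N -> t = (s + 1 + 2 * q + r)%N -> exact_gadget t%:R s%:R 1 0 q%:R = 0.
Proof.
move=> r_le1 ->; rewrite /exact_gadget !natrD.
by case: r r_le1 => [|[|]] // _; field.
Qed.

Lemma exact_gadget_gt (s t q r : nat) :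
  (r <= 1)%N -> s = (t + 1 + 2 * q + r)%N -> exact_gadget t%:R s%:R 0 q%:R 0 = 0.
Proof.
move=> r_le1 ->; rewrite /exact_gadget !natrD.
by case: r r_le1 => [|[|]] // _; field.
Qed.
End ExactGadget.

Section ExactQuadratization.
Variables (R : realFieldType) (n t : nat).
Hypothesis t_le_n : (t <= n)%N.
Local Open Scope ring_scope.
Local Notation m := (n %/ 2)%N.

(* Auxiliary bits: [0, u) holds y, [u, u + p1) counts k1, [u + p1, u + p1 + p2)
   counts k2; the remaining ones are unused.  The truncated subtractions make p1 = 0
   for t = n and p2 = 0 for t = 0. *)
Let u : nat := (0 < t < n)%N.
Let p1 := ((n - t - 1) %/ 2)%N.
Let p2 := ((t - 1) %/ 2)%N.

Definition choice_bit (y : {ffun 'I_m -> bool}) : bool :=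
  (t == n) || (0 < window_count 0 u y)%N.

Lemma choice_bitE y :
  (t == n)%:R + (window_count 0 u y)%:R = (choice_bit y)%:R :> R.
Proof.
have := window_count_le 0 u y; rewrite /choice_bit /u subn0.
move: (window_count 0 u y) => c; case: eqP => [->|_] /=.
  by rewrite ltnn andbF leqn0 => /eqP ->; rewrite addr0.
by rewrite add0r; case: c => [|[|c]] //; case: (0 < t < n)%N.
Qed.

Definition exact_poly (z : 'I_(n + m) -> R) : R :=
  exact_gadget t%:R (lin_form x_weight z)
    ((t == n)%:R + lin_form (window_weight 0 u) z)
    (lin_form (window_weight u (u + p1)) z)
    (lin_form (window_weight (u + p1) (u + p1 + p2)) z).

Lemma exact_poly_quadratic : quadratic_fun exact_poly.
Proof.
apply: exact_gadget_quadratic; try exact: affine_lin_form.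
exact: affineD (affine_cst _ _) (affine_lin_form _).
Qed.

Lemma exact_poly_join x y :
  exact_poly (join_pt R x y) =
  exact_gadget t%:R (\sum_(i < n) x i)%N%:R (choice_bit y)%:R
    (window_count u (u + p1) y)%:R (window_count (u + p1) (u + p1 + p2) y)%:R.
Proof. by rewrite /exact_poly x_weight_join !window_weight_join choice_bitE. Qed.

Lemma exact_funE x : exact_fun R t x = ((\sum_(i < n) x i)%N == t)%:R.
Proof. by rewrite /exact_fun; case: eqP. Qed.

Lemma exact_poly_ge x y : exact_fun R t x <= exact_poly (join_pt R x y).
Proof. by rewrite exact_poly_join exact_funE exact_gadget_ge. Qed.

Definition aux_point (b : bool) (k1 k2 : nat) : {ffun 'I_m -> bool} :=
  [ffun j : 'I_m => ((j < u) && b) || (u <= j < u + k1) || (u + p1 <= j < u + p1 + k2)]%N.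

Lemma aux_point_counts b k1 k2 : (k1 <= p1)%N -> (k2 <= p2)%N ->
  let y := aux_point b k1 k2 in
  [/\ choice_bit y = (t == n) || (0 < t < n)%N && b,
      window_count u (u + p1) y = k1 & window_count (u + p1) (u + p1 + p2) y = k2].
Proof.
move=> k1_le k2_le y; have size_le : (u + p1 + p2 <= m)%N by rewrite /u /p1 /p2; lia.
rewrite /choice_bit (@window_count_prefix _ 0 u (u * b)); first last.
- by move=> j hj; rewrite ffunE; lia.
- by lia.
split; first by rewrite /u; case: (0 < t < n)%N; rewrite ?mul1n ?mul0n; case: b {y}.
all: apply: window_count_prefix => [|j hj]; rewrite ?ffunE; lia.
Qed.

Lemma exact_poly_attained x : exists y, exact_poly (join_pt R x y) = exact_fun R t x.
Proof.
set s := (\sum_(i < n) x i)%N.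
have s_le_n : (s <= n)%N.
  by rewrite -[n]card_ord -sum1_card; apply: leq_sum => i _; exact: leq_b1.
rewrite exact_funE -/s; have [lt_st|lt_ts|est] := ltngtP s t.
- have k2_le : ((t - s - 1) %/ 2 <= p2)%N by apply: leq_div2r; lia.
  have [bitE k1E k2E] := aux_point_counts true (leq0n p1) k2_le.
  exists (aux_point true 0 ((t - s - 1) %/ 2)); rewrite exact_poly_join bitE k1E k2E andbT.
  have -> : (t == n) || (0 < t < n)%N by lia.
  by apply: (@exact_gadget_lt _ s t _ ((t - s - 1) %% 2)); lia.
- have k1_le : ((s - t - 1) %/ 2 <= p1)%N by apply: leq_div2r; lia.
  have [bitE k1E k2E] := aux_point_counts false k1_le (leq0n p2).
  exists (aux_point false ((s - t - 1) %/ 2) 0); rewrite exact_poly_join bitE k1E k2E andbF orbF.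
  have -> : (t == n) = false by lia.
  by apply: (@exact_gadget_gt _ s t _ ((s - t - 1) %% 2)); lia.
- have [_ k1E k2E] := aux_point_counts false (leq0n p1) (leq0n p2).
  by exists (aux_point false 0 0); rewrite exact_poly_join -/s k1E k2E est exact_gadget_eq.
Qed.
End ExactQuadratization.

Theorem corollary4 (R : realFieldType) (n t : nat) :
  (1 <= n)%N -> (t <= n)%N ->
  has_quadratization (n %/ 2) (exact_fun R t (n:=n)).
Proof.
(* The construction needs no special case for n = 0. *)
move=> _ t_le_n; have [c [a [b epoly]]] := exact_poly_quadratic R n t.
exists c, a, b => x; split => [y|].
  by rewrite -epoly; apply: exact_poly_ge.
have [y ey] := @exact_poly_attained R n t t_le_n x.
by exists y; rewrite -epoly.
Qed.
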